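(* Let $\underline{p}\in\Theta$, $\delta>0$, and $\underline{v}\in\mathbb{R}^S$ with $v_{x_1}\neq v_{x_2}$ for some $x_1,x_2\in S$. Then $C(\underline{p},\underline{v},\delta)=\mu_q^*$, where $(\mu_q^*,\lambda)\in\mathbb{R}^2$ satisfies the system $$\sum_{x\in S}p_x\ln\Big(1+\frac{v_x-\mu_q^*}{\lambda}\Big)=\delta,\qquad \sum_{x\in S}p_x\frac{\lambda}{\lambda+v_x-\mu_q^*}=1,$$ together with $\mu_p<\mu_q^*<V$ and $\lambda<\mu_q^*-V$.
   Context: $S$ is a finite set and $\Theta=\{\underline{q}\in\mathbb{R}^{S}:\sum_{y\in S}q_y=1,\ q_y>0\ \forall y\in S\}$ is the set of strictly positive probability vectors on $S$. The Kullback–Leibler divergence is $\mathbf{I}(\underline{p},\underline{q})=\sum_{x\in S}p_x\ln(p_x/q_x)$. For $\underline{p}\in\Theta$, $\underline{v}\in\mathbb{R}^S$, $\delta\in\mathbb{R}$, define $C(\underline{p},\underline{v},\delta)=\sup_{\underline{q}\in\Theta}\{\sum_{x\in S}q_xv_x:\mathbf{I}(\underline{p},\underline{q})\le\delta\}$. Write $\mu_p=\sum_{x\in S}p_xv_x$ and $V=\max_{x\in S}v_x$. *)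

From Stdlib Require Import Reals.
Open Scope R_scope.

(* The finite set S is modelled as {0, ..., n-1}; vectors in R^S are
   functions nat -> R, of which only the values at indices < n matter. *)

Fixpoint rsum (n : nat) (f : nat -> R) : R :=
  match n with
  | O => 0
  | S k => rsum k f + f k
  end.

Definition in_Theta (n : nat) (q : nat -> R) : Prop :=
  rsum n q = 1 /\ forall y, (y < n)%nat -> 0 < q y.

Definition KL (n : nat) (p q : nat -> R) : R :=
  rsum n (fun x => p x * ln (p x / q x)).

Definition mean (n : nat) (q v : nat -> R) : R := rsum n (fun x => q x * v x).

Definition C_set (n : nat) (p v : nat -> R) (delta : R) : R -> Prop :=
  fun m => exists q, in_Theta n q /\ KL n p q <= delta /\ m = mean n q v.

Definition is_C (n : nat) (p v : nat -> R) (delta m : R) : Prop :=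
  is_lub (C_set n p v delta) m.

Definition is_max (n : nat) (v : nat -> R) (V : R) : Prop :=
  (forall x, (x < n)%nat -> v x <= V) /\ exists x, (x < n)%nat /\ v x = V.

Definition solves_system (n : nat) (p v : nat -> R) (delta V mu lam : R) : Prop :=
  rsum n (fun x => p x * ln (1 + (v x - mu) / lam)) = delta /\
  rsum n (fun x => p x * (lam / (lam + v x - mu))) = 1 /\
  mean n p v < mu /\ mu < V /\ lam < mu - V.

(* For [c > max v], tilting [p] by [1 / (c - v)] gives the distribution
   [q_c x = p x / (Z c * (c - v x))], where [Z c = sum_x p x / (c - v x)],
   and [KL(p, q_c) = ln (Z c) + sum_x p x ln (c - v x)].  This divergence tends
   to [+oo] as [c] decreases to [V] and to [0] as [c] grows, so by the
   intermediate value theorem some [q_c] has divergence exactly [delta]; its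
   mean [mu = c - 1 / Z c] together with [lambda = - 1 / Z c] solves the system.
   Conversely, for any solution the weights [w x = 1 + (v x - mu) / lambda] are
   positive with [sum_x p x ln (w x) = delta], and Jensen's inequality for [ln]
   shows that every [q] with [KL(p, q) <= delta] has [sum_x q x w x >= 1], i.e.
   mean at most [mu]; the value [mu] is attained at [q x = p x / w x]. *)
From Stdlib Require Import Reals Lra Lia.
Open Scope R_scope.

Lemma rsum_ext n f g :
  (forall x, (x < n)%nat -> f x = g x) -> rsum n f = rsum n g.
Proof.
  induction n as [|n IH]; intros Hfg; simpl; [reflexivity|].
  rewrite IH, Hfg; auto.
Qed.

Lemma rsum_le n f g :
  (forall x, (x < n)%nat -> f x <= g x) -> rsum n f <= rsum n g.
Proof.
  induction n as [|n IH]; intros Hfg; simpl; [lra|].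
  pose proof (IH (fun x Hx => Hfg x (Nat.lt_lt_succ_r _ _ Hx))).
  pose proof (Hfg n (Nat.lt_succ_diag_r n)). lra.
Qed.

Lemma rsum_plus n f g : rsum n (fun x => f x + g x) = rsum n f + rsum n g.
Proof. induction n as [|n IH]; simpl; [lra|]. rewrite IH; ring. Qed.

Lemma rsum_minus n f g : rsum n (fun x => f x - g x) = rsum n f - rsum n g.
Proof. induction n as [|n IH]; simpl; [lra|]. rewrite IH; ring. Qed.

Lemma rsum_scal n k f : rsum n (fun x => k * f x) = k * rsum n f.
Proof. induction n as [|n IH]; simpl; [lra|]. rewrite IH; ring. Qed.

Lemma rsum_nonneg n f : (forall x, (x < n)%nat -> 0 <= f x) -> 0 <= rsum n f.
Proof.
  induction n as [|n IH]; intros Hf; simpl; [lra|].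
  pose proof (IH (fun x Hx => Hf x (Nat.lt_lt_succ_r _ _ Hx))).
  pose proof (Hf n (Nat.lt_succ_diag_r n)). lra.
Qed.

Lemma rsum_term_le n f k :
  (forall x, (x < n)%nat -> 0 <= f x) -> (k < n)%nat -> f k <= rsum n f.
Proof.
  induction n as [|n IH]; intros Hf Hk; [lia|]. simpl.
  pose proof (rsum_nonneg n f (fun x Hx => Hf x (Nat.lt_lt_succ_r _ _ Hx))).
  destruct (Nat.eq_dec k n) as [->|Hkn]; [lra|].
  pose proof (IH (fun x Hx => Hf x (Nat.lt_lt_succ_r _ _ Hx)) ltac:(lia)).
  pose proof (Hf n (Nat.lt_succ_diag_r n)). lra.
Qed.

Lemma rsum_pos n f k :
  (forall x, (x < n)%nat -> 0 <= f x) -> (k < n)%nat -> 0 < f k -> 0 < rsum n f.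
Proof.
  intros Hf Hk Hfk. pose proof (rsum_term_le n f k Hf Hk). lra.
Qed.

Lemma continuity_pt_rsum n (f : nat -> R -> R) c :
  (forall x, (x < n)%nat -> continuity_pt (f x) c) ->
  continuity_pt (fun t => rsum n (fun x => f x t)) c.
Proof.
  induction n as [|n IH]; intros Hf; simpl.
  - apply continuity_pt_const. intros a b; reflexivity.
  - apply (continuity_pt_plus (fun t => rsum n (fun x => f x t)) (f n)).
    + apply IH; intros x Hx; apply Hf; lia.
    + apply Hf; lia.
Qed.

Lemma Rdiv_le_0_compat a b : 0 <= a -> 0 < b -> 0 <= a / b.
Proof.
  intros Ha Hb. apply Rmult_le_pos; [exact Ha | left; apply Rinv_0_lt_compat, Hb].
Qed.

Lemma continuity_pt_ln y : 0 < y -> continuity_pt ln y.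
Proof.
  intros Hy. apply derivable_continuous_pt. exists (/ y). apply derivable_pt_lim_ln, Hy.
Qed.

Lemma ln_le x y : 0 < x -> x <= y -> ln x <= ln y.
Proof.
  intros Hx [Hxy | <-]; [left; apply ln_increasing|]; lra.
Qed.

Lemma ln_div x y : 0 < x -> 0 < y -> ln (x / y) = ln x - ln y.
Proof.
  intros Hx Hy. unfold Rdiv.
  rewrite ln_mult, ln_Rinv; [ring | lra | lra | apply Rinv_0_lt_compat; lra].
Qed.

Lemma ln_le_sub_1 x : 0 < x -> ln x <= x - 1.
Proof.
  intros Hx. pose proof (exp_ineq1_le (ln x)) as Hexp.
  rewrite exp_ln in Hexp; lra.
Qed.

Section Probability.

Variables (n : nat) (p : nat -> R).
Hypothesis p_sum : rsum n p = 1.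
Hypothesis p_pos : forall x, (x < n)%nat -> 0 < p x.

Lemma prob_dim_pos : (0 < n)%nat.
Proof. destruct n; [simpl in p_sum; lra | lia]. Qed.

Lemma rsum_prob_scal k : rsum n (fun x => k * p x) = k.
Proof. rewrite rsum_scal, p_sum; ring. Qed.

Lemma rsum_prob_pos y :
  (forall x, (x < n)%nat -> 0 < y x) -> 0 < rsum n (fun x => p x * y x).
Proof.
  intros Hy. pose proof prob_dim_pos as Hn.
  apply (rsum_pos n _ 0%nat); [| exact Hn |].
  - intros x Hx. pose proof (p_pos x Hx). pose proof (Hy x Hx). nra.
  - pose proof (p_pos 0%nat Hn). pose proof (Hy 0%nat Hn). nra.
Qed.

(* From [ln t <= t - 1] at [t = y x / A], where [A] is the [p]-mean of [y]. *)
Lemma Jensen_ln y :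
  (forall x, (x < n)%nat -> 0 < y x) ->
  rsum n (fun x => p x * ln (y x)) <= ln (rsum n (fun x => p x * y x)).
Proof.
  intros Hy. set (A := rsum n (fun x => p x * y x)).
  assert (HA : 0 < A) by exact (rsum_prob_pos y Hy).
  assert (Hgap : rsum n (fun x => p x * ln (y x / A)) <= 0).
  { apply Rle_trans with (rsum n (fun x => / A * (p x * y x) - p x)).
    - apply rsum_le; intros x Hx.
      pose proof (p_pos x Hx). pose proof (Hy x Hx).
      pose proof (ln_le_sub_1 (y x / A) ltac:(apply Rdiv_lt_0_compat; lra)).
      replace (/ A * (p x * y x) - p x) with (p x * (y x / A - 1)) by (field; lra).
      apply Rmult_le_compat_l; lra.
    - rewrite rsum_minus, rsum_scal, p_sum. fold A. field_simplify; lra. }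
  rewrite (rsum_ext _ _ (fun x => p x * ln (y x) - ln A * p x)) in Hgap.
  - rewrite rsum_minus, rsum_prob_scal in Hgap. lra.
  - intros x Hx. rewrite ln_div; [ring | apply Hy; auto | exact HA].
Qed.

End Probability.

Lemma mean_le_of_KL_le n p q v w mu lam :
  in_Theta n p -> in_Theta n q ->
  (forall x, (x < n)%nat -> 0 < w x) ->
  (forall x, (x < n)%nat -> v x = mu + lam * (w x - 1)) -> lam <= 0 ->
  KL n p q <= rsum n (fun x => p x * ln (w x)) -> mean n q v <= mu.
Proof.
  intros [p_sum p_pos] [q_sum q_pos] w_pos Hv Hlam HKL.
  set (A := rsum n (fun x => q x * w x)).
  assert (HlnA : 0 <= ln A).
  { assert (Hr : forall x, (x < n)%nat -> 0 < q x * w x / p x).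
    { intros x Hx. pose proof (p_pos x Hx). pose proof (q_pos x Hx). pose proof (w_pos x Hx).
      apply Rdiv_lt_0_compat; [apply Rmult_lt_0_compat |]; lra. }
    pose proof (Jensen_ln n p p_sum p_pos _ Hr) as HJ.
    rewrite (rsum_ext _ (fun x => p x * (q x * w x / p x)) (fun x => q x * w x)) in HJ
      by (intros x Hx; pose proof (p_pos x Hx); field; lra).
    rewrite (rsum_ext _ _ (fun x => p x * ln (w x) - p x * ln (p x / q x))) in HJ.
    - rewrite rsum_minus in HJ. unfold KL in HKL. fold A in HJ. lra.
    - intros x Hx.
      pose proof (p_pos x Hx). pose proof (q_pos x Hx). pose proof (w_pos x Hx).
      rewrite !ln_div, ln_mult by (try apply Rmult_lt_0_compat; lra). ring. }
  assert (HA : 1 <= A).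
  { destruct (Rle_lt_dec 1 A) as [|HA1]; [assumption|].
    assert (0 < A) by (apply rsum_prob_pos; [exact q_sum | exact q_pos | exact w_pos]).
    pose proof (ln_increasing A 1 ltac:(assumption) HA1). rewrite ln_1 in *. lra. }
  unfold mean.
  rewrite (rsum_ext _ _ (fun x => lam * (q x * w x) + (mu - lam) * q x))
    by (intros x Hx; rewrite Hv by exact Hx; ring).
  rewrite rsum_plus, !rsum_scal, q_sum. fold A. nra.
Qed.

Lemma solves_system_is_C n p v delta V mu lam :
  in_Theta n p -> is_max n v V ->
  solves_system n p v delta V mu lam -> is_C n p v delta mu.
Proof.
  intros Hp [v_le_V _] (Hdelta & Hnorm & _ & HmuV & Hlam).
  destruct Hp as [p_sum p_pos].
  assert (Hgap : forall x, (x < n)%nat -> lam + v x - mu < 0)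
    by (intros x Hx; pose proof (v_le_V x Hx); lra).
  assert (lam_neg : lam < 0) by lra.
  set (w := fun x => 1 + (v x - mu) / lam).
  assert (w_pos : forall x, (x < n)%nat -> 0 < w x).
  { intros x Hx. pose proof (Hgap x Hx).
    replace (w x) with ((- (lam + v x - mu)) * / (- lam)) by (unfold w; field; lra).
    apply Rmult_lt_0_compat; [| apply Rinv_0_lt_compat]; lra. }
  set (q := fun x => p x * (lam / (lam + v x - mu))).
  change (rsum n q = 1) in Hnorm.
  assert (Hq : forall x, (x < n)%nat -> q x = p x / w x).
  { intros x Hx. pose proof (Hgap x Hx). unfold q, w. field; lra. }
  split.
  - intros m (q' & Hq' & HKL & ->).
    apply (mean_le_of_KL_le n p q' v w mu lam);
      [split; assumption | exact Hq' | exact w_pos | | lra |].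
    + intros x Hx. unfold w. field. lra.
    + unfold w. lra.
  - intros b Hb. apply Hb. exists q.
    split; [split | split].
    + exact Hnorm.
    + intros x Hx. rewrite Hq by exact Hx.
      apply Rdiv_lt_0_compat; [apply p_pos | apply w_pos]; exact Hx.
    + right. rewrite <- Hdelta. apply rsum_ext. intros x Hx. rewrite Hq by exact Hx.
      pose proof (p_pos x Hx). pose proof (w_pos x Hx).
      f_equal. f_equal. change (1 + (v x - mu) / lam) with (w x). field. lra.
    + unfold mean.
      rewrite (rsum_ext _ _ (fun x => (mu - lam) * q x + lam * p x)).
      * rewrite rsum_plus, !rsum_scal. rewrite Hnorm, p_sum. ring.
      * intros x Hx. pose proof (Hgap x Hx). unfold q. field. lra.
Qed.

Definition tilt_norm n (p v : nat -> R) c := rsum n (fun x => p x / (c - v x)).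

Definition tilt_KL n (p v : nat -> R) c :=
  ln (tilt_norm n p v c) + rsum n (fun x => p x * ln (c - v x)).

Section Tilting.

Variables (n : nat) (p v : nat -> R) (V : R).
Hypothesis p_sum : rsum n p = 1.
Hypothesis p_pos : forall x, (x < n)%nat -> 0 < p x.
Hypothesis v_le_V : forall x, (x < n)%nat -> v x <= V.

Lemma mean_le_max : mean n p v <= V.
Proof.
  rewrite <- (rsum_prob_scal n p p_sum V). unfold mean.
  apply rsum_le; intros x Hx. pose proof (p_pos x Hx). pose proof (v_le_V x Hx). nra.
Qed.

Lemma tilt_norm_pos c : V < c -> 0 < tilt_norm n p v c.
Proof.
  intros Hc. apply (rsum_prob_pos n p p_sum p_pos (fun x => / (c - v x))).
  intros x Hx. pose proof (v_le_V x Hx). apply Rinv_0_lt_compat; lra.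
Qed.

Lemma tilt_norm_le c : V < c -> (c - V) * tilt_norm n p v c <= 1.
Proof.
  intros Hc. unfold tilt_norm. rewrite <- rsum_scal, <- p_sum.
  apply rsum_le; intros x Hx. pose proof (p_pos x Hx). pose proof (v_le_V x Hx).
  assert (0 < p x / (c - v x)) by (apply Rdiv_lt_0_compat; lra).
  replace (p x) with (p x / (c - v x) * (c - v x)) at 2 by (field; lra). nra.
Qed.

Lemma tilt_norm_lt c x1 : V < c -> (x1 < n)%nat -> v x1 < V ->
  (c - V) * tilt_norm n p v c < 1.
Proof.
  intros Hc Hx1 Hv1.
  assert (Hpos : 0 < rsum n (fun x => p x * (V - v x) / (c - v x))).
  { apply (rsum_pos n _ x1); [| exact Hx1 |].
    - intros x Hx. pose proof (p_pos x Hx). pose proof (v_le_V x Hx).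
      apply Rdiv_le_0_compat; nra.
    - pose proof (p_pos x1 Hx1). apply Rdiv_lt_0_compat; nra. }
  rewrite (rsum_ext _ _ (fun x => p x - (c - V) * (p x / (c - v x)))) in Hpos.
  - rewrite rsum_minus, rsum_scal, p_sum in Hpos. unfold tilt_norm. lra.
  - intros x Hx. pose proof (v_le_V x Hx). field. lra.
Qed.

(* Strict Jensen for the convex map [t |-> 1 / (c - t)]: the gap is the
   [p]-mean of [(v - mean)^2 / ((c - v) (c - mean))]. *)
Lemma tilt_norm_gt c x2 : V < c -> (x2 < n)%nat -> v x2 <> mean n p v ->
  1 < (c - mean n p v) * tilt_norm n p v c.
Proof.
  intros Hc Hx2 Hv2. set (a := mean n p v) in *.
  assert (Hca : 0 < c - a) by (pose proof mean_le_max; unfold a; lra).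
  set (gap := fun x => p x * ((v x - a) * (v x - a)) / ((c - v x) * (c - a))).
  assert (Hpos : 0 < rsum n gap).
  { apply (rsum_pos n _ x2); [| exact Hx2 |]; unfold gap.
    - intros x Hx. pose proof (p_pos x Hx). pose proof (v_le_V x Hx).
      apply Rdiv_le_0_compat; [apply Rmult_le_pos; [lra | apply Rle_0_sqr] |].
      apply Rmult_lt_0_compat; lra.
    - pose proof (p_pos x2 Hx2). pose proof (v_le_V x2 Hx2).
      apply Rdiv_lt_0_compat; [apply Rmult_lt_0_compat; [lra | apply Rsqr_pos_lt; lra] |].
      apply Rmult_lt_0_compat; lra. }
  rewrite (rsum_ext _ _ (fun x => ((c - a) * (p x / (c - v x)) - p x)
                                  - / (c - a) * (p x * v x) + a / (c - a) * p x)) in Hpos.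
  - rewrite rsum_plus, !rsum_minus, !rsum_scal, p_sum in Hpos.
    fold (mean n p v) a in Hpos. unfold tilt_norm.
    replace (a / (c - a) * 1) with (/ (c - a) * a) in Hpos by (field; lra). lra.
  - intros x Hx. pose proof (v_le_V x Hx). unfold gap. field. lra.
Qed.

Lemma continuity_tilt_KL c : V < c -> continuity_pt (tilt_KL n p v) c.
Proof.
  intros Hc. unfold tilt_KL.
  apply (continuity_pt_plus (fun t => ln (tilt_norm n p v t))
                            (fun t => rsum n (fun x => p x * ln (t - v x)))).
  - apply (continuity_pt_comp (tilt_norm n p v) ln).
    + apply (continuity_pt_rsum n (fun x t => p x / (t - v x))).
      intros x Hx. pose proof (v_le_V x Hx). reg. lra.
    + apply continuity_pt_ln, tilt_norm_pos, Hc.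
  - apply (continuity_pt_rsum n (fun x t => p x * ln (t - v x))).
    intros x Hx. pose proof (v_le_V x Hx). reg. apply continuity_pt_ln. lra.
Qed.

Lemma tilt_KL_le c : V < c -> tilt_KL n p v c <= (V - mean n p v) / (c - V).
Proof.
  intros Hc. unfold tilt_KL.
  assert (Hnorm : ln (tilt_norm n p v c) <= - ln (c - V)).
  { rewrite <- ln_Rinv by lra. apply ln_le; [apply tilt_norm_pos, Hc |].
    pose proof (tilt_norm_le c Hc).
    apply (Rmult_le_reg_l (c - V)); [lra |]. rewrite Rinv_r; lra. }
  assert (Hlog : rsum n (fun x => p x * ln (c - v x)) <= ln (c - mean n p v)).
  { replace (c - mean n p v) with (rsum n (fun x => p x * (c - v x))).
    - apply Jensen_ln; [exact p_sum | exact p_pos |].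
      intros x Hx. pose proof (v_le_V x Hx). lra.
    - rewrite (rsum_ext _ _ (fun x => c * p x - p x * v x)) by (intros; ring).
      rewrite rsum_minus, rsum_prob_scal by exact p_sum. reflexivity. }
  pose proof mean_le_max.
  pose proof (ln_le_sub_1 ((c - mean n p v) / (c - V)) ltac:(apply Rdiv_lt_0_compat; lra)).
  rewrite ln_div in * by lra.
  replace ((V - mean n p v) / (c - V)) with ((c - mean n p v) / (c - V) - 1) by (field; lra).
  lra.
Qed.

Lemma tilt_KL_ge c x0 x1 : V < c -> (x0 < n)%nat -> (x1 < n)%nat ->
  v x0 = V -> v x1 < V ->
  ln (p x0) + p x1 * ln (V - v x1) - p x1 * ln (c - V) <= tilt_KL n p v c.
Proof.
  intros Hc Hx0 Hx1 Hv0 Hv1. unfold tilt_KL.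
  assert (Hnorm : ln (p x0) - ln (c - V) <= ln (tilt_norm n p v c)).
  { pose proof (p_pos x0 Hx0).
    rewrite <- ln_div by lra. apply ln_le; [apply Rdiv_lt_0_compat; lra |].
    rewrite <- Hv0. apply (rsum_term_le n (fun x => p x / (c - v x))); [| exact Hx0].
    intros x Hx. pose proof (p_pos x Hx). pose proof (v_le_V x Hx).
    apply Rdiv_le_0_compat; lra. }
  assert (Hlog : ln (c - V) + p x1 * (ln (c - v x1) - ln (c - V))
                 <= rsum n (fun x => p x * ln (c - v x))).
  { assert (Hsum : p x1 * (ln (c - v x1) - ln (c - V))
                   <= rsum n (fun x => p x * (ln (c - v x) - ln (c - V)))).
    { apply (rsum_term_le n (fun x => p x * (ln (c - v x) - ln (c - V)))); [| exact Hx1].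
      intros x Hx. pose proof (p_pos x Hx). pose proof (v_le_V x Hx).
      pose proof (ln_le (c - V) (c - v x) ltac:(lra) ltac:(lra)). nra. }
    rewrite (rsum_ext _ _ (fun x => p x * ln (c - v x) - ln (c - V) * p x)) in Hsum
      by (intros; ring).
    rewrite rsum_minus, rsum_prob_scal in Hsum by exact p_sum. lra. }
  pose proof (p_pos x1 Hx1).
  pose proof (ln_le (V - v x1) (c - v x1) ltac:(lra) ltac:(lra)).
  nra.
Qed.

(* [lo] makes the lower bound of [tilt_KL_ge] exceed [delta]; [hi] makes the
   upper bound of [tilt_KL_le] fall below it. *)
Lemma tilt_KL_root delta x0 x1 : 0 < delta -> (x0 < n)%nat -> (x1 < n)%nat ->
  v x0 = V -> v x1 < V -> exists c, V < c /\ tilt_KL n p v c = delta.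
Proof.
  intros Hdelta Hx0 Hx1 Hv0 Hv1. pose proof (p_pos x1 Hx1). pose proof mean_le_max.
  set (a := mean n p v) in *.
  set (B := (ln (p x0) + p x1 * ln (V - v x1) - delta) / p x1).
  set (lo := V + exp (B - 1)).
  set (hi := lo + (V - a) / delta + 1).
  assert (Hlo : V < lo) by (pose proof (exp_pos (B - 1)); unfold lo; lra).
  assert (Hhi : lo < hi).
  { pose proof (Rdiv_le_0_compat (V - a) delta ltac:(lra) Hdelta). unfold hi; lra. }
  assert (KL_lo : delta < tilt_KL n p v lo).
  { pose proof (tilt_KL_ge lo x0 x1 Hlo Hx0 Hx1 Hv0 Hv1) as Hge.
    replace (lo - V) with (exp (B - 1)) in Hge by (unfold lo; ring).
    rewrite ln_exp in Hge.
    replace (p x1 * (B - 1)) with (ln (p x0) + p x1 * ln (V - v x1) - delta - p x1)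
      in Hge by (unfold B; field; lra).
    lra. }
  assert (KL_hi : tilt_KL n p v hi < delta).
  { apply Rle_lt_trans with (1 := tilt_KL_le hi ltac:(lra)). fold a.
    apply (Rmult_lt_reg_r (hi - V)); [lra |].
    unfold Rdiv. rewrite Rmult_assoc, Rinv_l, Rmult_1_r by lra.
    replace (delta * (hi - V)) with (delta * (lo - V) + (V - a) + delta)
      by (unfold hi; field; lra).
    pose proof (Rmult_lt_0_compat delta (lo - V) Hdelta ltac:(lra)). lra. }
  destruct (Ranalysis5.IVT_interv (fun c => delta - tilt_KL n p v c) lo hi)
    as (c & [Hc _] & Hroot).
  - intros c [Hc _].
    apply (continuity_pt_minus (fct_cte delta) (tilt_KL n p v)).
    + apply continuity_pt_const. intros y z; reflexivity.
    + apply continuity_tilt_KL. lra.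
  - exact Hhi.
  - lra.
  - lra.
  - exists c. split; lra.
Qed.

Lemma solves_system_of_tilt_KL delta c x1 x2 :
  V < c -> tilt_KL n p v c = delta ->
  (x1 < n)%nat -> v x1 < V -> (x2 < n)%nat -> v x2 <> mean n p v ->
  solves_system n p v delta V
    (c - / tilt_norm n p v c) (- / tilt_norm n p v c).
Proof.
  intros Hc HKL Hx1 Hv1 Hx2 Hv2.
  pose proof (tilt_norm_pos c Hc) as HZ.
  pose proof (tilt_norm_lt c x1 Hc Hx1 Hv1) as HZV.
  pose proof (tilt_norm_gt c x2 Hc Hx2 Hv2) as HZa.
  set (Z := tilt_norm n p v c) in *.
  assert (Hcv : forall x, (x < n)%nat -> 0 < c - v x)
    by (intros x Hx; pose proof (v_le_V x Hx); lra).
  assert (HZinv : Z * / Z = 1) by (apply Rinv_r; lra).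
  assert (0 < / Z) by (apply Rinv_0_lt_compat; lra).
  split; [| split; [| split; [| split]]].
  - rewrite <- HKL. unfold tilt_KL. fold Z.
    rewrite (rsum_ext _ _ (fun x => p x * ln (c - v x) + ln Z * p x)).
    + rewrite rsum_plus, rsum_prob_scal by exact p_sum. ring.
    + intros x Hx. pose proof (Hcv x Hx).
      replace (1 + (v x - (c - / Z)) / - / Z) with ((c - v x) * Z) by (field; lra).
      rewrite ln_mult by lra. ring.
  - rewrite (rsum_ext _ _ (fun x => / Z * (p x / (c - v x)))).
    + rewrite rsum_scal. fold (tilt_norm n p v c) Z. field. lra.
    + intros x Hx. pose proof (Hcv x Hx).
      replace (- / Z + v x - (c - / Z)) with (v x - c) by ring.
      field; split; lra.
  - nra.
  - nra.
  - lra.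
Qed.

End Tilting.

Theorem theorem2 (n : nat) (p v : nat -> R) (delta V : R) :
  in_Theta n p -> 0 < delta ->
  (exists x1 x2, (x1 < n)%nat /\ (x2 < n)%nat /\ v x1 <> v x2) ->
  is_max n v V ->
  (exists mu lam, solves_system n p v delta V mu lam) /\
  (forall mu lam, solves_system n p v delta V mu lam -> is_C n p v delta mu).
Proof.
  intros Hp Hdelta (a1 & a2 & Ha1 & Ha2 & Hne) HV.
  split; [| intros mu lam; apply solves_system_is_C; assumption].
  destruct Hp as [p_sum p_pos], HV as [v_le_V (x0 & Hx0 & Hv0)].
  assert (v_nonconst : forall t, exists x, (x < n)%nat /\ v x <> t).
  { intros t. destruct (Req_dec (v a1) t) as [<- | Ht]; [exists a2 | exists a1]; auto. }
  destruct (v_nonconst V) as (x1 & Hx1 & Hv1).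
  assert (Hv1' : v x1 < V) by (pose proof (v_le_V x1 Hx1); lra).
  destruct (v_nonconst (mean n p v)) as (x2 & Hx2 & Hv2).
  destruct (tilt_KL_root n p v V p_sum p_pos v_le_V delta x0 x1)
    as (c & Hc & HKL); [assumption .. |].
  do 2 eexists.
  exact (solves_system_of_tilt_KL n p v V p_sum p_pos v_le_V delta c x1 x2
           Hc HKL Hx1 Hv1' Hx2 Hv2).
Qed.
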